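(* Let $\chi_3(n)=\left(\frac{n}{3}\right)$ be the Legendre symbol modulo $3$ and let $\tilde\chi_3$ be either of its two modified characters (i.e. $\tilde\chi_3(3)=+1$ or $\tilde\chi_3(3)=-1$). Then for every integer $k\ge1$ and every $n\in\mathbb{N}\cup\{0\}$, $$\#\{1\le m\le k:\ \tilde\chi_3(n+m)=-1\}\ \ge\ \frac12\Big(k-\Big\lfloor\frac{\log k}{\log 3}\Big\rfloor-2\Big).$$ Consequently $\delta(k)\ge \tfrac12 k+O(\log k)$.
   Context: For a real Dirichlet character $\chi_q$ modulo $q>1$, a modified character $\tilde\chi_q$ is the completely multiplicative function $\mathbb{N}\to\{+1,-1\}$ with $\tilde\chi_q(p)=\chi_q(p)$ for primes $p\nmid q$ and $\tilde\chi_q(p)=\eta(p)\in\{+1,-1\}$ (an arbitrary sign) for primes $p\mid q$. Here $\delta(k)$ denotes the supremum, over all $q>1$, all real characters $\chi_q$ mod $q$ and all sign choices $\eta$, of $\min_{n\ge0}\#\{1\le m\le k:\tilde\chi_q(n+m)=-1\}$. *)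

From Stdlib Require Import Reals Lra Lia ZArith Arith List Znumtheory.
From Coquelicot Require Import Coquelicot.
Open Scope R_scope.

Definition chi3 (n : nat) : Z :=
  match (n mod 3)%nat with
  | 0%nat => 0%Z
  | 1%nat => 1%Z
  | _ => (-1)%Z
  end.

Definition is_real_char (q : nat) (chi : nat -> Z) : Prop :=
  chi 1%nat = 1%Z /\
  (forall m n : nat, chi (m * n)%nat = (chi m * chi n)%Z) /\
  (forall n : nat, chi (n + q)%nat = chi n) /\
  (forall n : nat, chi n = 0%Z \/ chi n = 1%Z \/ chi n = (-1)%Z) /\
  (forall n : nat, chi n = 0%Z <-> Nat.gcd n q <> 1%nat).

(* f is the modified character tilde chi_q attached to chi mod q and the
   sign choice eta (eta p in {+1,-1} for primes p | q): f is a completely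
   multiplicative function on the positive integers with values in
   {+1,-1}, f p = chi p for primes p not dividing q, f p = eta p for
   primes p dividing q.  (The value f 0 is irrelevant.) *)
Definition is_modified_char (q : nat) (chi : nat -> Z) (eta : nat -> Z)
    (f : nat -> Z) : Prop :=
  (forall p : nat, prime (Z.of_nat p) -> Nat.divide p q ->
      eta p = 1%Z \/ eta p = (-1)%Z) /\
  (forall n : nat, (0 < n)%nat -> f n = 1%Z \/ f n = (-1)%Z) /\
  (forall m n : nat, (0 < m)%nat -> (0 < n)%nat -> f (m * n)%nat = (f m * f n)%Z) /\
  (forall p : nat, prime (Z.of_nat p) -> ~ Nat.divide p q -> f p = chi p) /\
  (forall p : nat, prime (Z.of_nat p) -> Nat.divide p q -> f p = eta p).

Definition negcount (f : nat -> Z) (k n : nat) : nat :=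
  length (filter (fun m => Z.eqb (f (n + m)%nat) (-1)%Z) (seq 1 k)).

Definition minneg (f : nat -> Z) (k : nat) : Rbar :=
  Glb_Rbar (fun y => exists n : nat, y = INR (negcount f k n)).

Definition delta (k : nat) : Rbar :=
  Lub_Rbar (fun x => exists (q : nat) (chi eta f : nat -> Z),
    (1 < q)%nat /\ is_real_char q chi /\ is_modified_char q chi eta f /\
    Finite x = minneg f k).

(* Write S(a, L) for the sum of f over [a, a + L), so that the number of -1's
   of f on an interval of length L is (L - S)/2.  Away from multiples of 3 the
   modified character f is chi3, whose partial sums lie in {-1, 0, 1}; on the
   multiples 3j it is eta * f(j).  Hence S(a, L) is a chi3 sum plus +-S(a', L')
   with L' about L/3, and after log_3 L steps |S| <= log_3 L + 2.  For delta, it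
   suffices to exhibit one modified character: n |-> chi3 of the 3-free part
   of n, the choice tilde chi3(3) = 1. *)
From Stdlib Require Import Reals ZArith Arith List Znumtheory Lia Lra.
From Coquelicot Require Import Coquelicot.
Open Scope R_scope.

Ltac euclid3 x :=
  pose proof (Nat.div_mod_eq x 3); pose proof (Nat.mod_upper_bound x 3 ltac:(lia)).

Lemma chi3_mul (a b : nat) : chi3 (a * b) = (chi3 a * chi3 b)%Z.
Proof.
  unfold chi3. rewrite Nat.Div0.mul_mod.
  euclid3 a; euclid3 b.
  destruct (a mod 3)%nat as [|[|[|]]]; destruct (b mod 3)%nat as [|[|[|]]];
    simpl; lia.
Qed.

Lemma chi3_unit (n : nat) : (n mod 3 <> 0)%nat -> chi3 n = 1%Z \/ chi3 n = (-1)%Z.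
Proof. intros H. unfold chi3. destruct (n mod 3)%nat as [|[|]]; auto; lia. Qed.

Lemma chi3_mod3_eq0 (n : nat) : (n mod 3 = 0)%nat -> chi3 n = 0%Z.
Proof. intros H. unfold chi3. rewrite H. reflexivity. Qed.

Lemma is_real_char_chi3 : is_real_char 3 chi3.
Proof.
  split; [reflexivity|]. split; [exact chi3_mul|]. split.
  { intros n. unfold chi3. replace (n + 3)%nat with (n + 1 * 3)%nat by lia.
    rewrite Nat.Div0.mod_add. reflexivity. }
  split.
  { intros n. unfold chi3. destruct (n mod 3)%nat as [|[|]]; auto. }
  intros n. rewrite Nat.gcd_comm, <- Nat.Lcm0.gcd_mod, Nat.gcd_comm.
  unfold chi3. euclid3 n.
  destruct (n mod 3)%nat as [|[|[|]]]; simpl; split; intro; lia.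
Qed.

Fixpoint sum_range (f : nat -> Z) (a L : nat) : Z :=
  match L with O => 0%Z | S L' => (f a + sum_range f (S a) L')%Z end.

Lemma sum_range_S (f : nat -> Z) (a L : nat) :
  sum_range f a (S L) = (sum_range f a L + f (a + L)%nat)%Z.
Proof.
  revert a; induction L as [|L IH]; intros a; simpl.
  - rewrite Nat.add_0_r. lia.
  - simpl in IH. rewrite IH. replace (S a + L)%nat with (a + S L)%nat by lia. lia.
Qed.

Definition is_two_mod3 (x : nat) : Z := if (x mod 3 =? 2)%nat then 1%Z else 0%Z.

Lemma sum_range_chi3 (a L : nat) :
  sum_range chi3 a L = (is_two_mod3 (a + L) - is_two_mod3 a)%Z.
Proof.
  revert a; induction L as [|L IH]; intros a; simpl.
  - rewrite Nat.add_0_r. lia.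
  - rewrite IH. replace (S a + L)%nat with (a + S L)%nat by lia.
    assert (chi3 a = is_two_mod3 (S a) - is_two_mod3 a)%Z.
    { unfold chi3, is_two_mod3. euclid3 a; euclid3 (S a).
      destruct (a mod 3)%nat as [|[|[|]]]; try lia;
        destruct (S a mod 3)%nat as [|[|[|]]]; simpl; lia. }
    lia.
Qed.

Lemma sum_range_chi3_abs_le1 (a L : nat) : (Z.abs (sum_range chi3 a L) <= 1)%Z.
Proof.
  rewrite sum_range_chi3. unfold is_two_mod3.
  destruct (_ =? _)%nat; destruct (_ =? _)%nat; lia.
Qed.

Section ThreeAdicRecursion.

Variables (f : nat -> Z) (eta : Z).
Hypothesis eta_sign : eta = 1%Z \/ eta = (-1)%Z.
Hypothesis f_coprime3 : forall m, (1 <= m)%nat -> (m mod 3 <> 0)%nat -> f m = chi3 m.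
Hypothesis f_mul3 : forall j, (1 <= j)%nat -> f (3 * j)%nat = (eta * f j)%Z.
Hypothesis f_sign : forall m, (1 <= m)%nat -> f m = 1%Z \/ f m = (-1)%Z.

(* [(x + 2) / 3] is the ceiling of x/3: the multiples of 3 in [a, a + L) are
   the 3j with j in [(a + 2)/3, (a + L + 2)/3). *)
Lemma sum_range_split3 (a L : nat) : (1 <= a)%nat ->
  sum_range f a L =
    (sum_range chi3 a L
     + eta * sum_range f ((a + 2) / 3) ((a + L + 2) / 3 - (a + 2) / 3))%Z.
Proof.
  intros Ha; induction L as [|L IH].
  - simpl. rewrite Nat.add_0_r, Nat.sub_diag. simpl. lia.
  - rewrite !sum_range_S, IH.
    euclid3 (a + L)%nat; euclid3 (a + S L + 2)%nat; euclid3 (a + L + 2)%nat.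
    destruct (Nat.eq_dec ((a + L) mod 3) 0) as [E|E].
    + euclid3 (a + 2)%nat.
      replace ((a + S L + 2) / 3 - (a + 2) / 3)%nat
        with (S ((a + L + 2) / 3 - (a + 2) / 3)) by lia.
      rewrite sum_range_S, chi3_mod3_eq0 by exact E.
      replace ((a + 2) / 3 + ((a + L + 2) / 3 - (a + 2) / 3))%nat
        with ((a + L) / 3)%nat by lia.
      assert (f (a + L)%nat = (eta * f ((a + L) / 3)%nat)%Z) as ->.
      { replace (a + L)%nat with (3 * ((a + L) / 3))%nat at 1 by lia.
        apply f_mul3; lia. }
      lia.
    + replace ((a + S L + 2) / 3)%nat with ((a + L + 2) / 3)%nat by lia.
      rewrite f_coprime3 by lia. lia.
Qed.

Lemma sum_range_abs_le (b a L : nat) : (1 <= a)%nat -> (L <= 3 ^ b)%nat ->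
  (Z.abs (sum_range f a L) <= Z.of_nat b + 1)%Z.
Proof.
  revert a L; induction b as [|b IH]; intros a L Ha HL.
  - simpl in HL. destruct L as [|[|]]; simpl; try lia.
    destruct (f_sign a Ha) as [-> | ->]; simpl; lia.
  - rewrite sum_range_split3 by exact Ha.
    pose proof (sum_range_chi3_abs_le1 a L).
    rewrite Nat.pow_succ_r' in HL. euclid3 (a + 2)%nat; euclid3 (a + L + 2)%nat.
    assert (IHb := IH ((a + 2) / 3)%nat ((a + L + 2) / 3 - (a + 2) / 3)%nat
                      ltac:(lia) ltac:(lia)).
    destruct eta_sign; subst eta; lia.
Qed.

End ThreeAdicRecursion.

Lemma modified_char3_spec (eta : Z) (f : nat -> Z) :
  is_modified_char 3 chi3 (fun _ => eta) f ->
  (forall m, (1 <= m)%nat -> (m mod 3 <> 0)%nat -> f m = chi3 m) /\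
  (forall j, (1 <= j)%nat -> f (3 * j)%nat = (eta * f j)%Z).
Proof.
  intros [_ [f_sign [f_mul [f_prime f_prime3]]]].
  assert (f1 : f 1%nat = 1%Z).
  { assert (f 1%nat = f 1%nat * f 1%nat)%Z by (rewrite <- f_mul; auto).
    destruct (f_sign 1%nat) as [E|E]; auto; rewrite E in *; lia. }
  split.
  - intros m; induction m as [m IH] using lt_wf_ind; intros Hm1 Hm3.
    destruct (Nat.eq_dec m 1) as [->|Hne1]; [exact f1|].
    destruct (prime_dec (Z.of_nat m)) as [Pm|NPm].
    + apply f_prime; [exact Pm|]. intros [z Hz]. euclid3 m.
      destruct z as [|[|[|z]]]; lia.
    + destruct (not_prime_divide (Z.of_nat m) ltac:(lia) NPm) as [d [Hd [z Hz]]].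
      set (a := Z.to_nat d); set (b := Z.to_nat z).
      assert (Eab : m = (b * a)%nat).
      { apply Nat2Z.inj. rewrite Nat2Z.inj_mul. unfold a, b.
        rewrite !Z2Nat.id; nia. }
      assert (1 < a < m /\ 1 < b < m)%nat by (unfold a; subst m; nia).
      assert (a mod 3 <> 0 /\ b mod 3 <> 0)%nat as [Ha3 Hb3].
      { split; intro E; apply Hm3; rewrite Eab, Nat.Div0.mul_mod, E by lia;
          [rewrite Nat.mul_0_r|]; reflexivity. }
      rewrite Eab, f_mul, chi3_mul, (IH a), (IH b) by lia. reflexivity.
  - intros j Hj. rewrite f_mul by lia. f_equal.
    apply f_prime3; [exact prime_3 | exists 1%nat; lia].
Qed.

Lemma double_count_neg_ones (f : nat -> Z) (n s L : nat) : (1 <= n + s)%nat ->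
  (forall m, (1 <= m)%nat -> f m = 1%Z \/ f m = (-1)%Z) ->
  (2 * Z.of_nat (length (filter (fun m => Z.eqb (f (n + m)%nat) (-1)%Z) (seq s L)))
    = Z.of_nat L - sum_range f (n + s) L)%Z.
Proof.
  intros Hs f_sign; revert s Hs; induction L as [|L IH]; intros s Hs;
    cbn [seq filter length sum_range]; [lia|].
  replace (S (n + s)) with (n + S s)%nat by lia.
  specialize (IH (S s) ltac:(lia)).
  destruct (f_sign (n + s)%nat Hs) as [-> | ->]; cbn [Z.eqb Pos.eqb length]; lia.
Qed.

Lemma ln3_gt0 : 0 < ln 3.
Proof. rewrite <- ln_1. apply ln_increasing; lra. Qed.

Lemma IZR_floor_le (x : R) : IZR (floor x) <= x.
Proof. exact (proj1 (proj2_sig (floor_ex x))). Qed.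

Lemma floor_log3_bounds (k : nat) : (1 <= k)%nat ->
  (0 <= floor (ln (INR k) / ln 3))%Z /\
  (k <= 3 ^ Z.to_nat (floor (ln (INR k) / ln 3) + 1))%nat.
Proof.
  intros Hk. pose proof ln3_gt0.
  assert (Hk1 : 1 <= INR k) by (apply (le_INR 1); lia).
  assert (Hlog : 0 <= ln (INR k) / ln 3).
  { apply Rdiv_le_0_compat; [rewrite <- ln_1; apply ln_le|]; lra. }
  unfold floor; destruct (floor_ex (ln (INR k) / ln 3)) as [e [He1 He2]]; simpl.
  assert (He0 : (0 <= e)%Z).
  { assert (IZR (-1) < IZR e) as Hlt by lra. apply lt_IZR in Hlt; lia. }
  split; [exact He0|].
  apply Nat.lt_le_incl, INR_lt. rewrite pow_INR.
  apply ln_lt_inv; [lra | apply pow_lt; simpl; lra|].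
  rewrite ln_pow by (simpl; lra).
  rewrite (INR_IZR_INZ (Z.to_nat _)), Z2Nat.id, plus_IZR by lia. simpl INR.
  replace (1 + 1 + 1) with 3 by ring.
  apply (Rmult_lt_compat_r (ln 3)) in He2; [|lra].
  unfold Rdiv in He2. rewrite Rmult_assoc, Rinv_l, Rmult_1_r in He2; lra.
Qed.

Lemma negcount_ge_floor_log3 (eta : Z) (f : nat -> Z) :
  (eta = 1%Z \/ eta = (-1)%Z) ->
  is_modified_char 3 chi3 (fun _ => eta) f ->
  forall k n : nat, (1 <= k)%nat ->
    INR (negcount f k n) >= / 2 * (INR k - IZR (floor (ln (INR k) / ln 3)) - 2).
Proof.
  intros eta_sign Hf k n Hk.
  destruct (modified_char3_spec eta f Hf) as [f_coprime3 f_mul3].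
  assert (f_sign : forall m, (1 <= m)%nat -> f m = 1%Z \/ f m = (-1)%Z).
  { destruct Hf as [_ [f_sign _]]. intros m Hm; apply f_sign; lia. }
  destruct (floor_log3_bounds k Hk) as [He0 Hpow].
  set (e := floor (ln (INR k) / ln 3)) in *.
  pose proof (sum_range_abs_le f eta eta_sign f_coprime3 f_mul3 f_sign
                _ (n + 1) k ltac:(lia) Hpow) as Hsum.
  pose proof (double_count_neg_ones f n 1 k ltac:(lia) f_sign) as Hcount.
  fold (negcount f k n) in Hcount.
  rewrite Z2Nat.id in Hsum by lia.
  assert (Hz : (Z.of_nat k - e - 2 <= 2 * Z.of_nat (negcount f k n))%Z) by lia.
  apply IZR_le in Hz. rewrite !minus_IZR, mult_IZR, <- !INR_IZR_INZ in Hz.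
  simpl in Hz. lra.
Qed.

(* The fuel [n] suffices since each recursive call divides by 3; the value at
   0 is irrelevant. *)
Fixpoint chi3_tilde_iter (fuel n : nat) : Z :=
  match fuel with
  | O => 1%Z
  | S fuel' => if (n mod 3 =? 0)%nat then chi3_tilde_iter fuel' (n / 3) else chi3 n
  end.

Definition chi3_tilde (n : nat) : Z := chi3_tilde_iter n n.

Lemma chi3_tilde_iter_fuel (fuel fuel' n : nat) :
  (1 <= n <= fuel)%nat -> (n <= fuel')%nat ->
  chi3_tilde_iter fuel n = chi3_tilde_iter fuel' n.
Proof.
  revert fuel' n; induction fuel as [|fuel IH]; intros fuel' n Hn Hn'; [lia|].
  destruct fuel' as [|fuel']; [lia|]. cbn [chi3_tilde_iter].
  destruct (n mod 3 =? 0)%nat eqn:E; [|reflexivity].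
  apply Nat.eqb_eq in E. euclid3 n. apply IH; lia.
Qed.

Lemma chi3_tilde_unfold (n : nat) : (1 <= n)%nat ->
  chi3_tilde n = if (n mod 3 =? 0)%nat then chi3_tilde (n / 3) else chi3 n.
Proof.
  intros Hn. unfold chi3_tilde. destruct n as [|n']; [lia|]. cbn [chi3_tilde_iter].
  destruct (S n' mod 3 =? 0)%nat eqn:E; [|reflexivity].
  apply Nat.eqb_eq in E. euclid3 (S n'). apply chi3_tilde_iter_fuel; lia.
Qed.

Lemma chi3_tilde_mul3 (t : nat) : (1 <= t)%nat -> chi3_tilde (3 * t) = chi3_tilde t.
Proof.
  intros Ht. rewrite chi3_tilde_unfold by lia.
  replace (3 * t)%nat with (t * 3)%nat by lia.
  rewrite Nat.Div0.mod_mul, Nat.div_mul by lia. reflexivity.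
Qed.

Lemma chi3_tilde_coprime3 (n : nat) : (1 <= n)%nat -> (n mod 3 <> 0)%nat ->
  chi3_tilde n = chi3 n.
Proof.
  intros Hn Hn3. rewrite chi3_tilde_unfold by lia.
  apply Nat.eqb_neq in Hn3. rewrite Hn3. reflexivity.
Qed.

Lemma chi3_tilde_sign (n : nat) : (1 <= n)%nat ->
  chi3_tilde n = 1%Z \/ chi3_tilde n = (-1)%Z.
Proof.
  induction n as [n IH] using lt_wf_ind; intros Hn.
  destruct (Nat.eq_dec (n mod 3) 0) as [E|E].
  - euclid3 n. replace n with (3 * (n / 3))%nat by lia.
    rewrite chi3_tilde_mul3 by lia. apply IH; lia.
  - rewrite chi3_tilde_coprime3 by assumption. apply chi3_unit, E.
Qed.

Lemma chi3_tilde_mul (m n : nat) : (0 < m)%nat -> (0 < n)%nat ->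
  chi3_tilde (m * n) = (chi3_tilde m * chi3_tilde n)%Z.
Proof.
  remember (m + n)%nat as N eqn:HN. assert (HmnN : (m + n <= N)%nat) by lia.
  clear HN; revert m n HmnN; induction N as [|N IH]; intros m n HmnN Hm Hn; [lia|].
  destruct (Nat.eq_dec (m mod 3) 0) as [Em|Em];
    [|destruct (Nat.eq_dec (n mod 3) 0) as [En|En]].
  - destruct (proj1 (Nat.Lcm0.mod_divide m 3) Em) as [t ->].
    replace (t * 3 * n)%nat with (3 * (t * n))%nat by lia.
    replace (t * 3)%nat with (3 * t)%nat by lia.
    rewrite !chi3_tilde_mul3 by nia. apply IH; lia.
  - destruct (proj1 (Nat.Lcm0.mod_divide n 3) En) as [t ->].
    replace (m * (t * 3))%nat with (3 * (m * t))%nat by lia.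
    replace (t * 3)%nat with (3 * t)%nat by lia.
    rewrite !chi3_tilde_mul3 by nia. apply IH; lia.
  - assert ((m * n) mod 3 <> 0)%nat.
    { rewrite Nat.Div0.mul_mod. euclid3 m; euclid3 n.
      destruct (m mod 3)%nat as [|[|[|]]]; destruct (n mod 3)%nat as [|[|[|]]];
        simpl; lia. }
    rewrite !chi3_tilde_coprime3 by nia. apply chi3_mul.
Qed.

Lemma is_modified_char_chi3_tilde : is_modified_char 3 chi3 (fun _ => 1%Z) chi3_tilde.
Proof.
  split; [auto|]. split; [intros n Hn; apply chi3_tilde_sign; lia|].
  split; [exact chi3_tilde_mul|].
  split; intros p Hp Hdiv; pose proof (prime_ge_2 _ Hp) as Hp2.
  - apply chi3_tilde_coprime3; [lia|].
    intros E. apply Hdiv. apply Nat.Lcm0.mod_divide in E.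
    destruct E as [z ->]. exists 1%nat.
    assert (H3 : (3 | Z.of_nat (z * 3))%Z) by (exists (Z.of_nat z); lia).
    destruct (prime_divisors _ Hp _ H3) as [E|[E|[E|E]]]; lia.
  - destruct Hdiv as [z Hz]. assert (p = 3%nat) as -> by (destruct z as [|[|]]; nia).
    reflexivity.
Qed.

Lemma delta_ge_of_negcount_ge (k q : nat) (chi eta f : nat -> Z) (L : R) :
  (1 < q)%nat -> is_real_char q chi -> is_modified_char q chi eta f ->
  (forall n, L <= INR (negcount f k n)) -> Rbar_le (Finite L) (delta k).
Proof.
  intros Hq Hchi Hf HL.
  set (E := fun y => exists n : nat, y = INR (negcount f k n)).
  destruct (Glb_Rbar_correct E) as [Hlb Hglb].
  assert (Hge : Rbar_le (Finite L) (Glb_Rbar E)).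
  { apply Hglb. intros y [n ->]. apply HL. }
  assert (Hle : Rbar_le (Glb_Rbar E) (Finite (INR (negcount f k 0)))).
  { apply Hlb. exists 0%nat. reflexivity. }
  destruct (Glb_Rbar E) as [x| |] eqn:Ex; simpl in Hge, Hle; try contradiction.
  apply Rbar_le_trans with (Finite x); [exact Hge|].
  apply Lub_Rbar_correct. exists q, chi, eta, f.
  split; [exact Hq|]. split; [exact Hchi|]. split; [exact Hf|].
  unfold minneg. fold E. rewrite Ex. reflexivity.
Qed.

Theorem mainTheorem3 :
  (forall (eta : Z) (f : nat -> Z),
     (eta = 1%Z \/ eta = (-1)%Z) ->
     is_modified_char 3 chi3 (fun _ => eta) f ->
     forall k n : nat, (1 <= k)%nat ->
       INR (negcount f k n) >=
         / 2 * (INR k - IZR (floor (ln (INR k) / ln 3)) - 2)) /\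
  (exists (C : R) (K0 : nat), forall k : nat, (K0 <= k)%nat ->
     Rbar_le (Finite (INR k / 2 - C * ln (INR k))) (delta k)).
Proof.
  split; [exact negcount_ge_floor_log3|].
  pose proof ln3_gt0.
  exists (3 / (2 * ln 3)), 3%nat. intros k Hk.
  apply (delta_ge_of_negcount_ge k 3 chi3 (fun _ => 1%Z) chi3_tilde);
    [lia | exact is_real_char_chi3 | exact is_modified_char_chi3_tilde|].
  intros n.
  pose proof (negcount_ge_floor_log3 1 chi3_tilde (or_introl eq_refl)
                is_modified_char_chi3_tilde k n ltac:(lia)) as Hlow.
  pose proof (IZR_floor_le (ln (INR k) / ln 3)) as Hfloor.
  assert (Hlog3 : 1 <= ln (INR k) / ln 3).
  { apply (Rmult_le_reg_r (ln 3)); [lra|].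
    unfold Rdiv. rewrite Rmult_assoc, Rinv_l, Rmult_1_l, Rmult_1_r by lra.
    apply ln_le; [lra|]. replace 3 with (INR 3) by (simpl; lra). apply le_INR; lia. }
  replace (3 / (2 * ln 3) * ln (INR k)) with (3 / 2 * (ln (INR k) / ln 3))
    by (field; lra).
  lra.
Qed.
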